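(* Let $\Gamma$ and $\Delta$ be sets and $\{f_\delta\}_{\delta\in\Delta}$ a family of real-valued functions on $\Gamma$ such that (i) for every $\delta\in\Delta$ the support $\{\gamma: f_\delta(\gamma)\ne0\}$ is countable, and (ii) for every $\gamma\in\Gamma$ the set $\{\delta\in\Delta: f_\delta(\gamma)\neq0\}$ is nonempty and countable. Then there exist an index set $D$ and partitions $(\Gamma_d)_{d\in D}$ of $\Gamma$ and $(\Delta_d)_{d\in D}$ of $\Delta$ into countable sets such that for $d_1\neq d_2$ we have $\Gamma_{d_1}\cap\Gamma_{d_2}=\emptyset$, $\Delta_{d_1}\cap\Delta_{d_2}=\emptyset$, and $f_\delta(\gamma)=0$ whenever $\gamma\in\Gamma_{d_1},\delta\in\Delta_{d_2}$ or $\gamma\in\Gamma_{d_2},\delta\in\Delta_{d_1}$. *)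

From mathcomp Require Import all_boot all_order all_algebra.
From mathcomp Require Import boolp classical_sets cardinality reals.
Set Implicit Arguments. Unset Strict Implicit. Unset Printing Implicit Defensive.
Import Order.TTheory GRing.Theory Num.Theory.

(* Join gamma and delta by an edge when f_delta(gamma) <> 0.  Every vertex of
   this bipartite graph on Gamma + Delta has countably many neighbours, so the
   vertices within n steps of a given vertex form a countable set, and each
   connected component, a countable union of these, is countable.  The
   components partition Gamma + Delta, and f vanishes between two distinct
   components because no edge joins them. *)

From Stdlib Require Import Relations.
From mathcomp Require Import all_boot all_order all_algebra.
From mathcomp Require Import boolp classical_sets cardinality reals.
Set Implicit Arguments. Unset Strict Implicit. Unset Printing Implicit Defensive.
Import Order.TTheory GRing.Theory Num.Theory.
Local Open Scope classical_set_scope.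
Local Open Scope ring_scope.

Lemma countableU (T : Type) (A B : set T) :
  countable A -> countable B -> countable (A `|` B).
Proof.
by move=> cA cB; rewrite -bigcup2E; apply: bigcup_countable => // -[|[|i]].
Qed.

Lemma countable_preimage (T U : Type) (i : U -> T) (A : set T) :
  injective i -> countable A -> countable (i @^-1` A).
Proof.
move=> i_inj; apply: sub_countable; apply: card_ge_preimage => x y _ _.
exact: i_inj.
Qed.

Section CountableClasses.
Variables (T : Type) (r : relation T).
Hypothesis countable_neighbours : forall x, countable [set y | r x y \/ r y x].

Fixpoint within_steps (x : T) (n : nat) : set T :=
  if n is m.+1 then
    within_steps x m `|` \bigcup_(y in within_steps x m) [set z | r y z \/ r z y]
  else [set x].

Lemma countable_within_steps x n : countable (within_steps x n).
Proof.
elim: n => [|n IHn] /=; first exact: countable1.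
by apply: countableU => //; apply: bigcup_countable.
Qed.

Lemma clos_rst_within_steps x y :
  clos_refl_sym_trans T r x y -> exists n, within_steps x n y.
Proof.
move=> /(clos_rst_rstn1 T r) xy.
elim: xy => [|y' z r_y'z _ [n y'_n]]; first by exists 0%N.
by exists n.+1; right; exists y'.
Qed.

Lemma countable_clos_rst_class x :
  countable [set y | clos_refl_sym_trans T r x y].
Proof.
apply: (@sub_countable _ _ _ (\bigcup_(n in setT) within_steps x n)).
  by apply: subset_card_le => y /clos_rst_within_steps[n y_n]; exists n.
by apply: bigcup_countable => // n _; exact: countable_within_steps.
Qed.

End CountableClasses.

Section EquivalenceClasses.
Variables (T : Type) (e : relation T).
Hypothesis e_equiv : equivalence T e.

Definition eqclass := {C : set T | exists x, C = e x}.

Definition class_of (x : T) : eqclass := exist _ (e x) (ex_intro _ x erefl).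

Lemma class_of_self x : sval (class_of x) x.
Proof. exact: Relation_Definitions.equiv_refl _ _ e_equiv x. Qed.

Lemma eqclass_eq (C1 C2 : eqclass) x y :
  sval C1 x -> sval C2 y -> e x y -> C1 = C2.
Proof.
have e_trans := Relation_Definitions.equiv_trans _ _ e_equiv.
have e_sym := Relation_Definitions.equiv_sym _ _ e_equiv.
case: C1 C2 => C1 [x1 E1] [C2 [x2 E2]] /=; subst C1 C2 => ex1 ey2 exy.
apply: eq_exist.
have e12 : e x1 x2 by apply: e_trans ex1 (e_trans _ _ _ exy (e_sym _ _ ey2)).
apply/funext => z; apply/propext; split; first by apply: e_trans; exact: e_sym.
exact: e_trans.
Qed.

Lemma eqclassI (C1 C2 : eqclass) : C1 <> C2 -> sval C1 `&` sval C2 = set0.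
Proof.
move=> C12; apply/seteqP; split=> // x [C1x C2x]; apply: C12.
exact: eqclass_eq C1x C2x (Relation_Definitions.equiv_refl _ _ e_equiv x).
Qed.

End EquivalenceClasses.

Definition incidence {R : nmodType} {Gamma Delta : Type}
  (f : Delta -> Gamma -> R) (u v : Gamma + Delta) : Prop :=
  if (u, v) is (inl gamma, inr delta) then f delta gamma != 0 else False.

Lemma countable_incidence_neighbours (R : nmodType) (Gamma Delta : Type)
    (f : Delta -> Gamma -> R) :
  (forall delta, countable [set gamma | f delta gamma != 0]) ->
  (forall gamma, countable [set delta | f delta gamma != 0]) ->
  forall u, countable [set v | incidence f u v \/ incidence f v u].
Proof.
move=> cGamma cDelta [gamma|delta].
- apply: sub_countable (card_le_trans (card_image_le inr _) (cDelta gamma)).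
  by apply: subset_card_le => -[gamma'|delta] /= [] // nz; exists delta.
- apply: sub_countable (card_le_trans (card_image_le inl _) (cGamma delta)).
  by apply: subset_card_le => -[gamma|delta'] /= [] // nz; exists gamma.
Qed.

Theorem lemma3p7 (R : realType) (Gamma Delta : Type)
  (f : Delta -> Gamma -> R)
  (h1 : forall delta : Delta, countable [set gamma | f delta gamma != 0])
  (h2 : forall gamma : Gamma,
      [set delta | f delta gamma != 0] !=set0 /\
      countable [set delta | f delta gamma != 0]) :
  exists (D : Type) (G : D -> set Gamma) (E : D -> set Delta),
    (* (G d)_d is a partition of Gamma into countable sets *)
    (forall gamma : Gamma, exists d : D, G d gamma) /\
    (forall d : D, countable (G d)) /\
    (* (E d)_d is a partition of Delta into countable sets *)
    (forall delta : Delta, exists d : D, E d delta) /\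
    (forall d : D, countable (E d)) /\
    (forall d1 d2 : D, d1 <> d2 ->
       G d1 `&` G d2 = set0 /\ E d1 `&` E d2 = set0 /\
       (forall gamma delta,
          (G d1 gamma /\ E d2 delta) \/ (G d2 gamma /\ E d1 delta) ->
          f delta gamma = 0)).
Proof.
pose connected := clos_refl_sym_trans _ (incidence f).
have conn_equiv : equivalence _ connected := clos_rst_is_equiv _ _.
have countable_class (C : eqclass connected) : countable (sval C).
  have [u ->] := proj2_sig C; apply: countable_clos_rst_class.
  by apply: countable_incidence_neighbours => // gamma; case: (h2 gamma).
exists (eqclass connected), (fun C => inl @^-1` sval C),
  (fun C => inr @^-1` sval C).
split; first by move=> gamma; exists (class_of connected (inl gamma));
  exact: (class_of_self conn_equiv).
split; first by move=> C; apply: countable_preimage (countable_class C) => x y [].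
split; first by move=> delta; exists (class_of connected (inr delta));
  exact: (class_of_self conn_equiv).
split; first by move=> C; apply: countable_preimage (countable_class C) => x y [].
move=> C1 C2 C12; split; last split.
- by rewrite -preimage_setI (eqclassI conn_equiv) // preimage_set0.
- by rewrite -preimage_setI (eqclassI conn_equiv) // preimage_set0.
- move=> gamma delta Cs; apply/eqP; apply: contraT => nz.
  have edge : connected (inl gamma) (inr delta) by apply: rst_step.
  exfalso; apply: C12.
  by case: Cs => -[Cg Cd]; [|apply/esym]; exact: (eqclass_eq conn_equiv Cg Cd edge).
Qed.
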